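(* Let $G_1$ and $G_2$ be connected graphs, let $H=G_1+G_2$ be their join, and let $g$ be a constant function from the vertex set of the first copy of $H$ to the vertex set of the second copy of $H$. Then $fix(F_H)=2\,fix(H)-i$ for some $i\in\{0,1\}$.
   Context: The join $G_1+G_2$ of graphs with disjoint vertex sets is the union $G_1\cup G_2$ together with all edges joining every vertex of $G_1$ to every vertex of $G_2$. A set $S\subseteq V(H)$ is a fixing set of a graph $H$ if the only automorphism of $H$ fixing every vertex of $S$ is the identity; $fix(H)$ is the minimum cardinality of a fixing set of $H$. Functigraph: let $H_1,H_2$ be disjoint copies of a connected graph $H$, with $A=V(H_1)$, $B=V(H_2)$, and let $g:A\to B$ be a function. The functigraph $F_H$ has vertex set $A\cup B$ and edge set $E(H_1)\cup E(H_2)\cup\{ug(u):u\in A\}$. *)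

From mathcomp Require Import all_boot all_fingroup.
Set Implicit Arguments. Unset Strict Implicit. Unset Printing Implicit Defensive.

Definition simple_graph (T : finType) (e : rel T) : Prop :=
  symmetric e /\ irreflexive e.

Definition connected_graph (T : finType) (e : rel T) : Prop :=
  (exists x : T, True) /\ forall x y : T, connect e x y.

Definition is_automorphism (T : finType) (e : rel T) (f : {perm T}) : Prop :=
  forall x y, e (f x) (f y) = e x y.

Definition fixing_setb (T : finType) (e : rel T) (S : {set T}) : bool :=
  [forall f : {perm T},
     ([forall x, [forall y, e (f x) (f y) == e x y]] &&
      [forall x in S, f x == x]) ==> (f == 1%g)].

(* fix(H): minimum cardinality of a fixing set (the full vertex set is always
   fixing, so #|T| is a correct default for the minimum). *)
Definition fixnum (T : finType) (e : rel T) : nat :=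
  \big[minn/#|T|]_(S : {set T} | fixing_setb e S) #|S|.

Definition join_rel (T1 T2 : finType) (e1 : rel T1) (e2 : rel T2)
  : rel (T1 + T2)%type :=
  fun u v => match u, v with
  | inl a, inl b => e1 a b
  | inr a, inr b => e2 a b
  | _, _ => true
  end.

(* Functigraph F_H: vertex set A + B, with A = inl-copy and B = inr-copy of H,
   g : A -> B. *)
Definition functigraph_rel (T : finType) (e : rel T) (g : T -> T)
  : rel (T + T)%type :=
  fun u v => match u, v with
  | inl a, inl b => e a b
  | inr a, inr b => e a b
  | inl a, inr b => b == g a
  | inr b, inl a => b == g a
  end.

From mathcomp Require Import all_boot all_fingroup.
From mathcomp Require Import zify.
Set Implicit Arguments. Unset Strict Implicit. Unset Printing Implicit Defensive.

(* When g is constant with value c, the vertex inr c of F_H is adjacent to the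
   whole first copy and to its neighbours in the second copy, so it is the only
   vertex of degree exceeding |V(H)|; every automorphism fixes it.  The only
   edges between the copies end at inr c, so by connectivity of H and counting,
   automorphisms also preserve both copies.  Hence the automorphisms of F_H are
   exactly the pairs (p, q) of automorphisms of H with q c = c, and a set fixes
   F_H iff its first-copy part S_A fixes H and its second-copy part S_B fixes H
   once c is added. *)

Lemma fixing_setP (T : finType) (e : rel T) (S : {set T}) :
  reflect (forall f : {perm T}, is_automorphism e f ->
             {in S, forall x, f x = x} -> f = 1%g)
          (fixing_setb e S).
Proof.
apply: (iffP forallP) => [fixS f autf fixf | fixS f].
  apply/eqP; apply: (implyP (fixS f)); apply/andP; split.
    by apply/forallP => x; apply/forallP => y; rewrite autf.
  by apply/forall_inP => x /fixf ->.
apply/implyP => /andP[/forallP autf /forall_inP fixf]; apply/eqP.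
apply: fixS => [x y | x /fixf /eqP //]; exact/eqP/(forallP (autf x) y).
Qed.

Lemma is_automorphism1 (T : finType) (e : rel T) : is_automorphism e 1.
Proof. by move=> x y; rewrite !perm1. Qed.

Lemma fixing_setT (T : finType) (e : rel T) : fixing_setb e [set: T].
Proof. by apply/fixing_setP => f _ fixf; apply/permP => x; rewrite perm1 fixf. Qed.

Lemma fixing_setS (T : finType) (e : rel T) (S S' : {set T}) :
  S \subset S' -> fixing_setb e S -> fixing_setb e S'.
Proof.
move=> sSS' /fixing_setP fixS; apply/fixing_setP => f autf fixf.
by apply: fixS => // x /(subsetP sSS'); apply: fixf.
Qed.

Lemma bigmin_leq (I : eqType) (r : seq I) (P : pred I) (F : I -> nat) d i :
  i \in r -> P i -> \big[minn/d]_(j <- r | P j) F j <= F i.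
Proof.
elim: r => [//|j r IHr]; rewrite in_cons big_cons => /orP[/eqP <- -> | ir Pi].
  exact: geq_minl.
by case: (P j); rewrite ?geq_min IHr ?orbT.
Qed.

Lemma fixnum_min (T : finType) (e : rel T) (S : {set T}) :
  fixing_setb e S -> fixnum e <= #|S|.
Proof. by move=> fixS; apply: bigmin_leq; rewrite ?mem_index_enum. Qed.

Lemma fixnum_attained (T : finType) (e : rel T) :
  exists2 S : {set T}, fixing_setb e S & #|S| = fixnum e.
Proof.
have [S fixS minS] := arg_minnP (fun S : {set T} => #|S|) (fixing_setT e).
exists S => //; apply/eqP; rewrite eqn_leq fixnum_min // andbT.
apply: (big_rec (fun m => #|S| <= m)); first exact: max_card.
by move=> S' m fixS' leSm; rewrite leq_min leSm minS.
Qed.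

Definition degree (T : finType) (e : rel T) (x : T) := #|[set y | e x y]|.

Lemma degree_aut (T : finType) (e : rel T) (f : {perm T}) x :
  is_automorphism e f -> degree e (f x) = degree e x.
Proof.
move=> autf; rewrite /degree -(card_preimset _ (@perm_inj _ f)).
by apply: eq_card => y; rewrite !inE autf.
Qed.

Lemma degree_lt_card (T : finType) (e : rel T) x :
  irreflexive e -> degree e x < #|T|.
Proof.
move=> irr; have sub : [set y | e x y] \subset [set~ x].
  by apply/subsetP => y; rewrite !inE; apply: contraTneq => ->; rewrite irr.
apply: leq_ltn_trans (subset_leq_card sub) _; rewrite cardsC1.
suff : 0 < #|T| by case: #|T|.
by apply/card_gt0P; exists x.
Qed.

Lemma card_preim_inl_inr (A B : finType) (S : {set A + B}) :
  #|inl @^-1: S| + #|inr @^-1: S| = #|S|.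
Proof.
rewrite -!sum1_card big_sumType.
by congr (_ + _); apply: eq_bigl => x; rewrite inE.
Qed.

Section SumPerm.
Variables (A B : finType) (p : {perm A}) (q : {perm B}).

Definition sum_fun (x : A + B) : A + B :=
  match x with inl a => inl (p a) | inr b => inr (q b) end.

Lemma sum_fun_inj : injective sum_fun.
Proof. by move=> [a|b] [a'|b'] //= [] /perm_inj ->. Qed.

Definition sum_perm : {perm A + B} := perm sum_fun_inj.

Lemma sum_perm_inl a : sum_perm (inl a) = inl (p a).
Proof. by rewrite permE. Qed.

Lemma sum_perm_inr b : sum_perm (inr b) = inr (q b).
Proof. by rewrite permE. Qed.

Lemma sum_perm_eq1 : (sum_perm == 1%g) = (p == 1%g) && (q == 1%g).
Proof.
apply/eqP/andP => [s1 | [/eqP p1 /eqP q1]]; last first.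
  by apply/permP => -[a|b]; rewrite perm1 ?sum_perm_inl ?sum_perm_inr ?p1 ?q1 perm1.
split; apply/eqP/permP => x; rewrite perm1.
  by have := sum_perm_inl x; rewrite s1 perm1 => -[].
by have := sum_perm_inr x; rewrite s1 perm1 => -[].
Qed.

End SumPerm.

Section ConstantFunctigraph.
Variables (V : finType) (e : rel V) (c : V) (g : V -> V).
Hypotheses (sym : symmetric e) (irr : irreflexive e).
Hypothesis conn : forall x y, connect e x y.
Hypothesis c_nonisolated : exists z, e c z.
Hypothesis gc : forall a, g a = c.

Local Notation F := (functigraph_rel e g).

Lemma degree_hub : #|V| < degree F (inr c).
Proof.
have [z ecz] := c_nonisolated.
have sub : inr z |: [set inl a | a in V] \subset [set y | F (inr c) y].
  by apply/subsetP => y; rewrite !inE => /orP[/eqP -> | /imsetP[a _ ->]] /=;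
    rewrite ?gc.
apply: leq_trans (subset_leq_card sub).
rewrite cardsU1 card_imset ?cardsT; last exact: inl_inj.
suff -> : inr z \notin [set inl a | a in V] by [].
by apply/imsetP => -[].
Qed.

Lemma degree_not_hub x : x != inr c -> degree F x <= #|V|.
Proof.
case: x => [a | b] x_hub.
  have sub : [set y | F (inl a) y]
      \subset inr c |: [set inl a' | a' in [set a' | e a a']].
    apply/subsetP => -[a' | b']; rewrite !inE /= ?gc.
      by move=> eaa'; apply: imset_f; rewrite inE.
    by move=> /eqP ->; rewrite eqxx.
  apply: leq_trans (subset_leq_card sub) _.
  rewrite cardsU1 card_imset; last exact: inl_inj.
  apply: leq_trans (degree_lt_card a irr).
  by rewrite /degree -add1n leq_add2r leq_b1.
have sub : [set y | F (inr b) y] \subset [set inr b' | b' in [set b' | e b b']].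
  apply/subsetP => -[a' | b']; rewrite !inE /= ?gc.
    by move=> /eqP bc; rewrite bc eqxx in x_hub.
  by move=> ebb'; apply: imset_f; rewrite inE.
apply: leq_trans (subset_leq_card sub) _.
rewrite card_imset; last exact: inr_inj.
exact: ltnW (degree_lt_card b irr).
Qed.

Lemma aut_fix_hub f : is_automorphism F f -> f (inr c) = inr c.
Proof.
move=> autf; apply/eqP; apply: contraT => /degree_not_hub.
by rewrite degree_aut // leqNgt degree_hub.
Qed.

Lemma aut_inv f : is_automorphism F f -> is_automorphism F f^-1.
Proof. by move=> autf x y; rewrite -autf !permKV. Qed.

Lemma aut_inl f : is_automorphism F f -> forall a, exists a', f (inl a) = inl a'.
Proof.
move=> autf a0; case E0: (f (inl a0)) => [a' | b0]; first by exists a'.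
exfalso.
pose moved := [pred a | if f (inl a) is inr _ then true else false].
have image_not_hub a b : f (inl a) = inr b -> b != c.
  move=> fa; apply/eqP => bc; suff : inl a = inr c :> V + V by [].
  by apply: (@perm_inj _ f); rewrite fa bc aut_fix_hub.
(* An edge [inr b -- inl a''] of [F] forces [b = c]. *)
have moved_closed : closed e moved.
  apply: (intro_closed (sym_connect_sym sym)) => a a' eaa'.
  rewrite !inE; case fa: (f (inl a)) => [// | b] _.
  have := autf (inl a) (inl a'); rewrite fa /= eaa'.
  by case: (f (inl a')) => //= a''; rewrite gc (negPf (image_not_hub _ _ fa)).
have inr_image a : exists2 b, f (inl a) = inr b & b != c.
  have := closed_connect moved_closed (conn a0 a); rewrite !inE /moved E0.
  by case fa: (f (inl a)) => [// | b] _; exists b; rewrite // (image_not_hub a).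
have sub : f @: [set inl a | a in V] \subset [set inr b | b in [set~ c]].
  apply/subsetP => y /imsetP[_ /imsetP[a _ ->] ->].
  by have [b -> bc] := inr_image a; apply: imset_f; rewrite !inE.
have := subset_leq_card sub.
rewrite !card_imset ?cardsT ?cardsC1; try exact: inl_inj; try exact: inr_inj;
  try exact: perm_inj.
have : 0 < #|V| by apply/card_gt0P; exists a0.
by case: #|V| => // n _; rewrite ltnn.
Qed.

Lemma aut_inr f : is_automorphism F f -> forall b, exists b', f (inr b) = inr b'.
Proof.
move=> autf b; case fb: (f (inr b)) => [a | b']; last by exists b'.
have [a' fa] := aut_inl (aut_inv autf) a.
by rewrite -fb permK in fa.
Qed.

Lemma sum_perm_aut p q :
  is_automorphism e p -> is_automorphism e q -> q c = c ->
  is_automorphism F (sum_perm p q).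
Proof.
move=> autp autq qc [a | b] [a' | b'];
  rewrite ?sum_perm_inl ?sum_perm_inr /= ?autp ?autq // !gc;
  by rewrite -{1}qc (inj_eq perm_inj).
Qed.

Lemma aut_sum_perm f : is_automorphism F f ->
  exists p q, [/\ is_automorphism e p, is_automorphism e q, q c = c
                & f = sum_perm p q].
Proof.
move=> autf.
pose fA a := if f (inl a) is inl a' then a' else a.
pose fB b := if f (inr b) is inr b' then b' else b.
have fAE a : f (inl a) = inl (fA a) by rewrite /fA; have [a' ->] := aut_inl autf a.
have fBE b : f (inr b) = inr (fB b) by rewrite /fB; have [b' ->] := aut_inr autf b.
have fA_inj : injective fA.
  by move=> a a' eq_fA; apply: inl_inj; apply: (@perm_inj _ f); rewrite !fAE eq_fA.
have fB_inj : injective fB.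
  by move=> b b' eq_fB; apply: inr_inj; apply: (@perm_inj _ f); rewrite !fBE eq_fB.
exists (perm fA_inj), (perm fB_inj); split.
- by move=> a a'; rewrite !permE -[e a a']/(F (inl a) (inl a')) -autf !fAE.
- by move=> b b'; rewrite !permE -[e b b']/(F (inr b) (inr b')) -autf !fBE.
- by rewrite permE; have := aut_fix_hub autf; rewrite fBE => -[].
- by apply/permP => -[a | b]; rewrite ?sum_perm_inl ?sum_perm_inr permE.
Qed.

Lemma fixing_set_sum (SA SB : {set V}) :
  fixing_setb e SA -> fixing_setb e (c |: SB) ->
  fixing_setb F ([set inl a | a in SA] :|: [set inr b | b in SB]).
Proof.
move=> /fixing_setP fixA /fixing_setP fixB; apply/fixing_setP => f autf fixf.
have [p [q [autp autq qc fE]]] := aut_sum_perm autf; subst f.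
apply/eqP; rewrite sum_perm_eq1; apply/andP; split; apply/eqP.
  apply: fixA => // a aA.
  by have := fixf (inl a); rewrite sum_perm_inl !inE imset_f // => /(_ isT) [].
apply: fixB => // b; rewrite !inE => /orP[/eqP -> // | bB].
by have := fixf (inr b); rewrite sum_perm_inr !inE imset_f ?orbT // => /(_ isT) [].
Qed.

Lemma fixing_set_inl (S : {set V + V}) :
  fixing_setb F S -> fixing_setb e (inl @^-1: S).
Proof.
move=> /fixing_setP fixS; apply/fixing_setP => p autp fixp.
have s1 : sum_perm p (1 : {perm V}) = 1%g.
  apply: fixS => [|[a | b] xS].
  - exact: sum_perm_aut autp (is_automorphism1 e) (perm1 c).
  - by rewrite sum_perm_inl fixp // inE.
  - by rewrite sum_perm_inr perm1.
by move/eqP: s1; rewrite sum_perm_eq1 => /andP[/eqP].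
Qed.

Lemma fixing_set_inr (S : {set V + V}) :
  fixing_setb F S -> fixing_setb e (c |: inr @^-1: S).
Proof.
move=> /fixing_setP fixS; apply/fixing_setP => q autq fixq.
have qc : q c = c by apply: fixq; rewrite !inE eqxx.
have s1 : sum_perm (1 : {perm V}) q = 1%g.
  apply: fixS => [|[a | b] xS].
  - exact: sum_perm_aut (is_automorphism1 e) autq qc.
  - by rewrite sum_perm_inl perm1.
  - by rewrite sum_perm_inr fixq // !inE xS orbT.
by move/eqP: s1; rewrite sum_perm_eq1 => /andP[_ /eqP].
Qed.

Lemma fixnum_functigraph_le : fixnum F <= 2 * fixnum e.
Proof.
have [S fixS <-] := fixnum_attained e.
have fixSc := fixing_setS (subsetUr [set c] S) fixS.
apply: leq_trans (fixnum_min (fixing_set_sum fixS fixSc)) _.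
apply: leq_trans (leq_card_setU _ _) _.
by rewrite mul2n -addnn leq_add ?leq_imset_card.
Qed.

Lemma fixnum_functigraph_ge : 2 * fixnum e <= (fixnum F).+1.
Proof.
have [S fixS <-] := fixnum_attained F.
have le_inl := fixnum_min (fixing_set_inl fixS).
have le_inr := leq_trans (fixnum_min (fixing_set_inr fixS)) (leq_card_setU _ _).
rewrite cards1 in le_inr.
by rewrite -card_preim_inl_inr; lia.
Qed.

End ConstantFunctigraph.

Section Join.
Variables (T1 T2 : finType) (e1 : rel T1) (e2 : rel T2).

Lemma join_symmetric : symmetric e1 -> symmetric e2 -> symmetric (join_rel e1 e2).
Proof. by move=> sym1 sym2 [a | b] [a' | b'] /=. Qed.

Lemma join_irreflexive :
  irreflexive e1 -> irreflexive e2 -> irreflexive (join_rel e1 e2).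
Proof. by move=> irr1 irr2 [a | b] /=. Qed.

Lemma join_connected (t1 : T1) (t2 : T2) x y : connect (join_rel e1 e2) x y.
Proof.
case: x y => [a | b] [a' | b'].
- by apply: (connect_trans (_ : connect _ _ (inr t2))); apply: connect1.
- exact: connect1.
- exact: connect1.
- by apply: (connect_trans (_ : connect _ _ (inl t1))); apply: connect1.
Qed.

End Join.

Theorem proposition3p13 (T1 T2 : finType) (e1 : rel T1) (e2 : rel T2)
  (g : (T1 + T2)%type -> (T1 + T2)%type) :
  simple_graph e1 -> simple_graph e2 ->
  connected_graph e1 -> connected_graph e2 ->
  (exists c, forall u, g u = c) ->
  exists i : nat, i <= 1 /\
    fixnum (functigraph_rel (join_rel e1 e2) g) + i
    = 2 * fixnum (join_rel e1 e2).
Proof.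
move=> [sym1 irr1] [sym2 irr2] [[t1 _] _] [[t2 _] _] [c gc].
have sym := join_symmetric sym1 sym2.
have irr := join_irreflexive irr1 irr2.
(* Connectedness of G1 and G2 only serves to make them nonempty. *)
have conn := join_connected e1 e2 t1 t2.
have c_nonisolated : exists z, join_rel e1 e2 c z.
  by case: c {gc} => [a | b]; [exists (inr t2) | exists (inl t1)].
have le := fixnum_functigraph_le sym irr conn c_nonisolated gc.
have ge := fixnum_functigraph_ge (join_rel e1 e2) gc.
exists (2 * fixnum (join_rel e1 e2) - fixnum (functigraph_rel (join_rel e1 e2) g)).
by split; lia.
Qed.
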